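(* Let $X,Y$ be Banach spaces, let $T\in\mathcal{L}(X,Y)$ be a monomorphism, and let $C\subset X$ be bounded. \begin{itemize} \item[(1)] If $x_0\in C$ satisfies $\|Tx_0\|=\sup\{\|Tx\|\colon x\in C\}$ and $Tx_0$ is an LUR point of $Y$, then $x_0$ is a strongly exposed point of $C$. Moreover, $x_0$ is strongly exposed (in $C$) by $T^*y^*$ for every $y^*\in S_{Y^*}$ such that $\operatorname{Re}y^*(Tx_0)=\sup\{\|Tx\|\colon x\in C\}$. \item[(2)] If $x_0\in C$ satisfies $\|Tx_0\|=\sup\{\|Tx\|\colon x\in C\}$ and $Tx_0$ is a rotund point of $Y$, then $x_0$ is an exposed point of $C$. Moreover, $x_0$ is exposed by $T^*y^*$ for every $y^*\in S_{Y^*}$ such that $\operatorname{Re}y^*(Tx_0)=\sup\{\|Tx\|\colon x\in C\}$. \end{itemize}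
   Context: A monomorphism is an operator $T\in\mathcal{L}(X,Y)$ which is an isomorphism onto its range (equivalently, $\|Tx\|\ge c\|x\|$ for some $c>0$ and all $x$). A point $y_0\in Y$ is an LUR point if whenever $\{y_n\}\subset Y$ satisfies $\|y_n\|\le\|y_0\|$ and $\|y_n+y_0\|\to2\|y_0\|$, then $\|y_n-y_0\|\to0$. A point $y_0$ is a rotund point if every $y$ with $\|y\|\le\|y_0\|$ and $\|y+y_0\|=2\|y_0\|$ equals $y_0$. A point $x_0\in C$ is exposed by $x^*\in X^*$ if $\operatorname{Re}x^*(x_0)=\sup_C\operatorname{Re}x^*$ and $x_0$ is the only point of $C$ where this supremum is attained; it is strongly exposed by $x^*$ if moreover every sequence $\{x_n\}\subset C$ with $\operatorname{Re}x^*(x_n)\to\operatorname{Re}x^*(x_0)$ converges in norm to $x_0$. $S_{Y^*}$ is the unit sphere of $Y^*$. *)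

From HB Require Import structures.
From mathcomp Require Import all_boot all_order all_algebra.
From mathcomp Require Import all_classical all_reals all_analysis.
From mathcomp Require Import complex.
Import numFieldNormedType.Exports.
Import Order.TTheory GRing.Theory Num.Theory.

Set Implicit Arguments.
Unset Strict Implicit.
Unset Printing Implicit Defensive.

Local Open Scope ring_scope.
Local Open Scope classical_set_scope.

(* Throughout, K is the scalar field (R or C), and [re : K -> K] is the real
   part map (the identity for K = R, and z |-> 'Re z for K = C).  Norms of
   vectors are elements of K (real elements), as in MathComp-Analysis. *)

Section Defs.
Variable K : numFieldType.
Variable re : K -> K.

Definition bounded_set (X : normedModType K) (C : set X) : Prop :=
  exists M : K, forall x, C x -> `|x| <= M.

Definition monomorphism (X Y : normedModType K) (T : X -> Y) : Prop :=
  exists2 c : K, 0 < c & forall x, c * `|x| <= `|T x|.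

Definition bounded_operator (X Y : normedModType K) (T : {linear X -> Y}) : Prop :=
  continuous T.

Definition dual_elt (X : normedModType K) (f : {linear X -> K^o}) : Prop :=
  continuous f.

Definition dual_norm_one (X : normedModType K) (f : X -> K) : Prop :=
  (forall x, `|x| <= 1 -> `|f x| <= 1) /\
  (forall e : K, 0 < e -> exists x, `|x| <= 1 /\ 1 - e < `|f x|).

Definition LUR_point (Y : normedModType K) (y0 : Y) : Prop :=
  forall y : nat -> Y, (forall n, `|y n| <= `|y0|) ->
    (fun n => `|y n + y0|) @ \oo --> 2 * `|y0| ->
    (fun n => `|y n - y0|) @ \oo --> (0 : K).

Definition rotund_point (Y : normedModType K) (y0 : Y) : Prop :=
  forall y : Y, `|y| <= `|y0| -> `|y + y0| = 2 * `|y0| -> y = y0.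

Definition exposed_by (X : normedModType K) (C : set X) (x0 : X) (f : X -> K) : Prop :=
  [/\ C x0,
      (forall x, C x -> re (f x) <= re (f x0)) &
      (forall x, C x -> re (f x) = re (f x0) -> x = x0)].

Definition strongly_exposed_by (X : normedModType K) (C : set X) (x0 : X)
    (f : X -> K) : Prop :=
  exposed_by C x0 f /\
  forall xs : nat -> X, (forall n, C (xs n)) ->
    (fun n => re (f (xs n))) @ \oo --> re (f x0) ->
    (fun n => `|xs n - x0|) @ \oo --> (0 : K).

Definition exposed_point (X : normedModType K) (C : set X) (x0 : X) : Prop :=
  exists f : {linear X -> K^o}, dual_elt f /\ exposed_by C x0 f.

Definition strongly_exposed_point (X : normedModType K) (C : set X) (x0 : X) : Prop :=
  exists f : {linear X -> K^o}, dual_elt f /\ strongly_exposed_by C x0 f.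

Definition lemma2p2_claim : Prop :=
  forall (X Y : completeNormedModType K) (T : {linear X -> Y}) (C : set X),
    bounded_operator T -> monomorphism T -> bounded_set C ->
    forall x0 : X, C x0 ->
    (forall x, C x -> `|T x| <= `|T x0|) ->
    (LUR_point (T x0) ->
       strongly_exposed_point C x0 /\
       forall ys : {linear Y -> K^o}, dual_elt ys -> dual_norm_one ys ->
         re (ys (T x0)) = `|T x0| ->
         strongly_exposed_by C x0 (fun x => ys (T x))) /\
    (rotund_point (T x0) ->
       exposed_point C x0 /\
       forall ys : {linear Y -> K^o}, dual_elt ys -> dual_norm_one ys ->
         re (ys (T x0)) = `|T x0| ->
         exposed_by C x0 (fun x => ys (T x))).

End Defs.

From HB Require Import structures.
From mathcomp Require Import all_boot all_order all_algebra.
From mathcomp Require Import all_classical all_reals all_analysis.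
From mathcomp Require Import complex.
From mathcomp Require Import lra ring.
Import numFieldNormedType.Exports.
Import Order.TTheory GRing.Theory Num.Theory.

Set Implicit Arguments.
Unset Strict Implicit.
Unset Printing Implicit Defensive.

Local Open Scope ring_scope.
Local Open Scope classical_set_scope.

(* If a norming functional y* (norm one, Re y*(T x0) = |T x0|) nearly attains
   its value at T x0 on T x with x in C, then |T x + T x0| >= Re y*(T x + T x0)
   is nearly 2 |T x0| while |T x| <= |T x0|.  Local uniform rotundity (resp.
   rotundity) at T x0 then forces T x to be close to (resp. equal to) T x0, and
   |T x| >= c |x| carries this back to x.  Norming functionals exist by the
   Hahn-Banach theorem, proved with Zorn's lemma over the reals and transferred
   to complex scalars by the complexification u |-> u y - i u (i y). *)

Section SeminormHahnBanach.
Variables (R : realType) (V : lmodType R) (p : V -> R).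
Hypothesis pD : forall x y, p (x + y) <= p x + p y.
Hypothesis pZ : forall r x, p (r *: x) = `|r| * p x.

Lemma seminorm0 : p 0 = 0.
Proof. by have := pZ 0 0; rewrite scale0r normr0 mul0r. Qed.

Lemma seminorm_ge0 x : 0 <= p x.
Proof.
have := pD x (- x); rewrite subrr seminorm0.
by have := pZ (-1) x; rewrite scaleN1r normrN normr1 mul1r => ->; lra.
Qed.

(* Partial linear functionals are encoded by their graphs, so that a chain of
   extensions is joined by a plain union. *)
Definition dominated_graph (G : set (V * R)) :=
  [/\ forall x a y b, G (x, a) -> G (y, b) -> G (x + y, a + b),
      forall r x a, G (x, a) -> G (r *: x, r * a) &
      forall x a, G (x, a) -> a <= p x].

Lemma dominated_graph_functional G x a b :
  dominated_graph G -> G (x, a) -> G (x, b) -> a = b.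
Proof.
move=> [GD GZ Gp] Ga Gb.
have Gab := GD _ _ _ _ Ga (GZ (-1) _ _ Gb).
have Gba := GD _ _ _ _ Gb (GZ (-1) _ _ Ga).
rewrite scaleN1r subrr in Gab Gba.
by have := Gp _ _ Gab; have := Gp _ _ Gba; rewrite seminorm0; lra.
Qed.

Section OneStepExtension.
Variables (H : set (V * R)) (z : V).
Hypotheses (domH : dominated_graph H) (H00 : H (0, 0)).

(* The admissible values [c] for the new functional at [z] form the interval
   [sup_(d, a) (a - p (d - z)), inf_(d, a) (p (d + z) - a)], which is nonempty
   by subadditivity of [p]. *)
Lemma extension_value_exists : exists c, forall d a, H (d, a) ->
  a - p (d - z) <= c /\ c <= p (d + z) - a.
Proof.
case: domH => [HD _ Hp].
pose L := [set e | exists d a, H (d, a) /\ e = a - p (d - z)].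
have Lub d' a' : H (d', a') -> ubound L (p (d' + z) - a').
  move=> Hd' e [d [a [Hd ->]]].
  have := Hp _ _ (HD _ _ _ _ Hd Hd'); have := pD (d - z) (d' + z).
  by rewrite addrACA addNr addr0; lra.
have L0 : L !=set0 by exists (0 - p (0 - z)), 0, 0.
have supL : has_sup L by split; last by exists (p (0 + z) - 0); exact: Lub H00.
exists (sup L) => d a Hd; split; first by apply: sup_upper_bound => //; exists d, a.
by apply: ge_sup L0 _; apply: Lub.
Qed.

Definition graph_extension (c : R) : set (V * R) :=
  [set xa | exists d a t, H (d, a) /\ xa = (d + t *: z, a + t * c)].

Lemma dominated_graph_extension c :
  (forall d a, H (d, a) -> a - p (d - z) <= c /\ c <= p (d + z) - a) ->
  dominated_graph (graph_extension c).
Proof.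
case: domH => [HD HZ Hp] cH; split.
- move=> _ _ _ _ [d [a [t [Hd [-> ->]]]]] [d' [a' [t' [Hd' [-> ->]]]]].
  exists (d + d'), (a + a'), (t + t'); split; first exact: HD.
  by congr (_, _); rewrite (scalerDl, mulrDl) addrACA.
- move=> r _ _ [d [a [t [Hd [-> ->]]]]].
  exists (r *: d), (r * a), (r * t); split; first exact: HZ.
  by rewrite scalerDr scalerA mulrDr mulrA.
move=> _ _ [d [a [t [Hd [-> ->]]]]].
have [t0|t0|->] := ltrgtP t 0; last by rewrite scale0r mul0r !addr0; apply: Hp.
- have /cH[+ _] := HZ (- t^-1) _ _ Hd.
  have -> : d + t *: z = - t *: (- t^-1 *: d - z).
    by rewrite scalerBr scalerA mulrNN mulfV ?lt_eqF // scale1r scaleNr opprK.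
  rewrite pZ normrN ltr0_norm // => cge.
  have nt0 : 0 < - t by rewrite oppr_gt0.
  have := ler_wpM2l (ltW nt0) cge.
  by rewrite mulrBr mulrA mulrNN mulfV ?lt_eqF // mul1r; lra.
- have /cH[_ +] := HZ t^-1 _ _ Hd.
  have -> : d + t *: z = t *: (t^-1 *: d + z).
    by rewrite scalerDr scalerA mulfV ?gt_eqF // scale1r.
  rewrite pZ gtr0_norm // => cle.
  have := ler_wpM2l (ltW t0) cle.
  by rewrite mulrBr mulrA mulfV ?gt_eqF // mul1r; lra.
Qed.

Lemma dominated_graph_extend_proper : (forall a, ~ H (z, a)) ->
  exists2 H', dominated_graph H' & H `<` H'.
Proof.
move=> Hz; have [c cH] := extension_value_exists.
exists (graph_extension c); first exact: dominated_graph_extension.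
split=> [[x a] Hx|sub]; first by exists x, a, 0; rewrite scale0r mul0r !addr0.
by apply: (Hz c); apply: sub; exists 0, 0, 1; rewrite scale1r mul1r !add0r.
Qed.

End OneStepExtension.

Variable y0 : V.

Definition norming_line : set (V * R) :=
  [set xa | exists t, xa = (t *: y0, t * p y0)].

Lemma dominated_norming_line : dominated_graph norming_line.
Proof.
split.
- by move=> x a y b [t [-> ->]] [s [-> ->]]; exists (t + s); rewrite scalerDl mulrDl.
- by move=> r x a [t [-> ->]]; exists (r * t); rewrite scalerA mulrA.
move=> x a [t [-> ->]]; rewrite pZ.
by apply: ler_wpM2r; [exact: seminorm_ge0 | exact: ler_norm].
Qed.

Lemma dominated_graph_chain_union (F : set (set (V * R))) :
  (forall A, F A -> dominated_graph (norming_line `|` A)) ->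
  total_on F subset ->
  dominated_graph (norming_line `|` \bigcup_(A in F) A).
Proof.
move=> domF totF; set U := _ `|` _.
have common e1 e2 : U e1 -> U e2 ->
    exists2 S, dominated_graph S & [/\ S `<=` U, S e1 & S e2].
  have sub A : F A -> norming_line `|` A `<=` U.
    by move=> FA e [?|?]; [left | right; exists A].
  move=> [L1|[A FA A1]] [L2|[B FB B2]].
  - by exists norming_line; [exact: dominated_norming_line | split=> // e; left].
  - by exists (norming_line `|` B); [exact: domF | split; [exact: sub|left|right]].
  - by exists (norming_line `|` A); [exact: domF | split; [exact: sub|right|left]].
  - have [AB|BA] := totF _ _ FA FB.
    + exists (norming_line `|` B); first exact: domF.
      by split; [exact: sub | right; apply: AB | right].
    + exists (norming_line `|` A); first exact: domF.
      by split; [exact: sub | right | right; apply: BA].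
split.
- by move=> x a y b U1 U2; have [S [SD _ _] [SU S1 S2]] := common _ _ U1 U2; exact/SU/SD.
- by move=> r x a U1; have [S [_ SZ _] [SU S1 _]] := common _ _ U1 U1; exact/SU/SZ.
- by move=> x a U1; have [S [_ _ Sp] [_ S1 _]] := common _ _ U1 U1; exact: Sp.
Qed.

Theorem hahn_banach_seminorm : exists u : V -> R,
  [/\ {morph u : x y / x + y}, forall r x, u (r *: x) = r * u x,
      forall x, u x <= p x & u y0 = p y0].
Proof.
have [A [domA Amax]] := Zorn_bigcup dominated_graph_chain_union.
set H := norming_line `|` A in domA.
have lineH : norming_line `<=` H by move=> e; left.
have H00 : H (0, 0) by apply: lineH; exists 0; rewrite scale0r mul0r.
have total x : exists a, H (x, a).
  apply: contrapT => /forallNP noHx.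
  have [H' domH' [HH' H'H]] := dominated_graph_extend_proper domA H00 noHx.
  apply: (Amax H'); last by rewrite setUidr // => e /lineH /HH'.
  by split=> [e Ae|H'A]; [apply: HH'; right | apply: H'H => e /H'A; right].
have [u Hu] := choice total.
have [HD HZ Hp] := domA.
exists u; split=> [x y|r x|x|].
- exact: dominated_graph_functional domA (Hu (x + y)) (HD _ _ _ _ (Hu x) (Hu y)).
- exact: dominated_graph_functional domA (Hu (r *: x)) (HZ _ _ _ (Hu x)).
- exact: Hp.
- apply: dominated_graph_functional domA (Hu y0) (lineH _ _).
  by exists 1; rewrite scale1r mul1r.
Qed.

End SeminormHahnBanach.

Lemma cvg_cst_eq (K : numFieldType) (a b : K) : (fun=> a) @ \oo --> b -> a = b.
Proof. exact: (cvg_unique _ (cvg_cst a)). Qed.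

Lemma LUR_point_rotund (K : numFieldType) (Y : normedModType K) (y0 : Y) :
  LUR_point y0 -> rotund_point y0.
Proof.
move=> LUR y yle ysum; have := LUR (fun=> y) (fun=> yle).
rewrite ysum => /(_ (cvg_cst _)) /cvg_cst_eq/eqP.
by rewrite normr_eq0 subr_eq0 => /eqP.
Qed.

Lemma monomorphism_inj (K : numFieldType) (X Y : normedModType K)
    (T : {linear X -> Y}) :
  monomorphism T -> injective T.
Proof.
move=> [c c0 Tmono] x x' Txx'; have := Tmono (x - x').
rewrite linearB Txx' subrr normr0 pmulr_rle0 // normr_le0 subr_eq0.
by move/eqP.
Qed.

Definition norming_functional (K : numFieldType) (re : K -> K)
    (Y : normedModType K) (y0 : Y) (f : Y -> K) :=
  (forall y, `|f y| <= `|y|) /\ re (f y0) = `|y0|.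

Lemma dual_norm_one_le (K : numFieldType) (Y : normedModType K)
    (f : {linear Y -> K^o}) :
  dual_norm_one f -> forall y, `|f y : K| <= `|y|.
Proof.
move=> [f1 _] y; have [->|y0] := eqVneq y 0; first by rewrite linear0 normr0.
have ny : 0 < `|y| by rewrite normr_gt0.
have := f1 (`|y|^-1 *: y).
rewrite normrZ ger0_norm ?invr_ge0 // mulVf ?gt_eqF // lexx => /(_ isT).
by rewrite linearZ /= normrM ger0_norm ?invr_ge0 // ler_pdivrMl // mulr1.
Qed.

Lemma norm_bounded_continuous (K : numFieldType) (Y : normedModType K)
    (f : {linear Y -> K^o}) :
  (forall y, `|f y : K| <= `|y|) -> continuous f.
Proof.
move=> fle; apply/bounded_linear_continuous/bounded_funP => r.
by exists r => y /(le_trans (fle y)).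
Qed.

Lemma monomorphism_cvg_dist (K : numFieldType) (X Y : normedModType K)
    (T : {linear X -> Y}) (xs : nat -> X) (x0 : X) : monomorphism T ->
  (fun n => `|T (xs n) - T x0|) @ \oo --> (0 : K) ->
  (fun n => `|xs n - x0|) @ \oo --> (0 : K).
Proof.
move=> [c c0 Tmono] /cvgrPdist_le Txs; apply/cvgrPdist_le => e e0.
apply: filterS (Txs _ (mulr_gt0 c0 e0)) => n.
rewrite !sub0r !normrN !normr_id => Txn; rewrite -(ler_pM2l c0).
by apply: le_trans (Tmono _) _; rewrite linearB.
Qed.

Section NormingExposure.
Variables (K : numFieldType) (re : K -> K).
Hypothesis re_le_norm : forall z, re z <= `|z|.
Hypothesis reD : {morph re : a b / a + b}.
Variables (X Y : normedModType K) (T : {linear X -> Y}) (C : set X) (x0 : X).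
Hypotheses (Cx0 : C x0) (Tmax : forall x, C x -> `|T x| <= `|T x0|).
Variable f : {linear Y -> K^o}.
Hypothesis norming_f : norming_functional re (T x0) f.

Lemma re_norming_le x : C x -> re (f (T x)) <= `|T x0|.
Proof.
move=> Cx; apply: le_trans (re_le_norm _) _.
exact: le_trans (norming_f.1 (T x)) (Tmax Cx).
Qed.

Lemma re_norming_add_le x : re (f (T x)) + `|T x0| <= `|T x + T x0|.
Proof.
rewrite -norming_f.2 -reD -(linearD f); apply: le_trans (re_le_norm _) _.
exact: norming_f.1.
Qed.

Lemma norm_add_max_le x : C x -> `|T x + T x0| <= 2 * `|T x0|.
Proof.
move=> Cx; rewrite mulr_natl mulr2n.
exact: le_trans (ler_normD _ _) (lerD (Tmax Cx) (lexx _)).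
Qed.

Lemma exposed_by_norming : monomorphism T -> rotund_point (T x0) ->
  exposed_by re C x0 (fun x => f (T x)).
Proof.
move=> /monomorphism_inj Tinj rot; split=> // [x Cx|x Cx fx].
  by rewrite norming_f.2; exact: re_norming_le.
apply/Tinj/rot; first exact: Tmax.
apply/eqP; rewrite eq_le norm_add_max_le //=.
by have := re_norming_add_le x; rewrite fx norming_f.2 mulr_natl mulr2n.
Qed.

Lemma cvg_norming_norm_add (xs : nat -> X) : (forall n, C (xs n)) ->
  (fun n => re (f (T (xs n)))) @ \oo --> `|T x0| ->
  (fun n => `|T (xs n) + T x0|) @ \oo --> 2 * `|T x0|.
Proof.
move=> Cxs /cvgrPdist_le fxs; apply/cvgrPdist_le => e e0.
apply: filterS (fxs e e0) => n.
have fxn_le := re_norming_le (Cxs n); have sum_le := norm_add_max_le (Cxs n).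
rewrite !ger0_norm ?subr_ge0 // => fxn_e; apply: le_trans fxn_e.
rewrite mulr_natl mulr2n -addrA lerD2l lerBlDr addrC lerBrDr addrC.
exact: re_norming_add_le.
Qed.

Lemma strongly_exposed_by_norming : monomorphism T -> LUR_point (T x0) ->
  strongly_exposed_by re C x0 (fun x => f (T x)).
Proof.
move=> Tmono LUR; split; first exact/exposed_by_norming/LUR_point_rotund.
move=> xs Cxs; rewrite /= norming_f.2 => /(cvg_norming_norm_add Cxs) sum_cvg.
exact: monomorphism_cvg_dist Tmono (LUR _ (fun n => Tmax (Cxs n)) sum_cvg).
Qed.

End NormingExposure.

Definition has_norming_functionals (K : numFieldType) (re : K -> K) :=
  forall (Y : normedModType K) (y0 : Y),
  exists f : {linear Y -> K^o}, norming_functional re y0 f.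

Lemma lemma2p2_claim_of_norming (K : numFieldType) (re : K -> K) :
  (forall z, re z <= `|z|) -> {morph re : a b / a + b} ->
  has_norming_functionals re -> lemma2p2_claim re.
Proof.
move=> re_le reD normings X Y T C Tcont Tmono _ x0 Cx0 Tmax.
have [f norming_f] := normings Y (T x0).
have fcont : continuous f := norm_bounded_continuous norming_f.1.
have dual_fT : dual_elt (f \o T : {linear X -> K^o}).
  by move=> x; apply: continuous_comp; [exact: Tcont | exact: fcont].
have norming_ys (ys : {linear Y -> K^o}) : dual_norm_one ys ->
    re (ys (T x0)) = `|T x0| -> norming_functional re (T x0) ys.
  by move=> /dual_norm_one_le.
split=> [LUR|rot]; split=> [|ys _ ys1 /(norming_ys _ ys1) ys_norming].
- by exists (f \o T : {linear X -> K^o}); split=> //; apply: strongly_exposed_by_norming.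
- exact: strongly_exposed_by_norming.
- by exists (f \o T : {linear X -> K^o}); split=> //; apply: exposed_by_norming.
- exact: exposed_by_norming.
Qed.

Lemma linear_functional_of (K : pzRingType) (Y : lmodType K) (u : Y -> K) :
  {morph u : x y / x + y} -> (forall r x, u (r *: x) = r * u x) ->
  exists f : {linear Y -> K^o}, f =1 u.
Proof.
move=> uD uZ; have u_lin : linear_for *:%R (u : Y -> K^o).
  by move=> a x y; rewrite uD uZ.
by exists (HB.pack_for {linear Y -> K^o} (u : Y -> K^o)
  (GRing.isLinear.Build K Y K^o *:%R (u : Y -> K^o) u_lin)).
Qed.

Lemma norming_functionals_real (R : realType) : has_norming_functionals (K := R) id.
Proof.
move=> Y y0.
have [u [uD uZ ule uy0]] := hahn_banach_seminorm (@ler_normD _ Y) (@normrZ _ Y) y0.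
have [f fu] := linear_functional_of uD uZ.
exists f; split=> [y|]; rewrite fu //.
have uN : u (- y) = - u y by rewrite -scaleN1r uZ mulN1r.
by rewrite ler_norml ule andbT lerNl -uN -normrN ule.
Qed.

Local Open Scope complex_scope.

Lemma ReD (R : realType) (a b : R[i]) : complex.Re (a + b) = complex.Re a + complex.Re b.
Proof. by case: a; case: b. Qed.

(* A complex vector space, viewed as a real one by restriction of scalars. *)
Definition realified (R : realType) (Y : lmodType R[i]) : Type := Y.

Section Realified.
Variables (R : realType) (Y : lmodType R[i]).

HB.instance Definition _ := GRing.Zmodule.on (realified Y).

Definition realified_scale (r : R) (v : realified Y) : realified Y := r%:C *: (v : Y).

Lemma realified_scaleA a b v :
  realified_scale a (realified_scale b v) = realified_scale (a * b) v.
Proof. by rewrite /realified_scale scalerA rmorphM. Qed.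

Lemma realified_scale1 v : realified_scale 1 v = v.
Proof. by rewrite /realified_scale rmorph1 scale1r. Qed.

Lemma realified_scaleDr a : {morph realified_scale a : u v / u + v}.
Proof. by move=> u v; rewrite /realified_scale scalerDr. Qed.

Lemma realified_scaleDl v : {morph realified_scale^~ v : a b / a + b}.
Proof. by move=> a b; rewrite /realified_scale raddfD scalerDl. Qed.

HB.instance Definition _ := GRing.Zmodule_isLmodule.Build R (realified Y)
  realified_scaleA realified_scale1 realified_scaleDr realified_scaleDl.

End Realified.

Section Complexification.
Variables (R : realType) (Y : lmodType R[i]) (u : Y -> R).
Hypothesis uD : {morph u : x y / x + y}.
Hypothesis uZ : forall (r : R) y, u (r%:C *: y) = r * u y.

Definition complexification (y : Y) : R[i] := (u y)%:C - 'i * (u ('i *: y))%:C.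

Lemma complexificationD : {morph complexification : x y / x + y}.
Proof. by move=> x y; rewrite /complexification scalerDr !uD !raddfD; ring. Qed.

Lemma complexificationZ c y : complexification (c *: y) = c * complexification y.
Proof.
have uC d v : u (d *: v) = complex.Re d * u v + complex.Im d * u ('i *: v).
  by rewrite {1}[d]complexE scalerDl ['i * _]mulrC -scalerA uD !uZ.
rewrite /complexification scalerA (uC ('i * c)) (uC c); case: c => a b.
by apply/eqP; rewrite eq_complex /=; apply/andP; split; apply/eqP; ring.
Qed.

Lemma Re_complexification y : complex.Re (complexification y) = u y.
Proof. by rewrite /complexification /=; ring. Qed.

End Complexification.

(* Rotating [y] by the phase of [g y] turns the bound on the real part into a
   bound on the modulus. *)
Lemma norm_le_of_Re_le (R : realType) (Y : normedModType R[i]) (g : Y -> R[i]) :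
  (forall c y, g (c *: y) = c * g y) ->
  (forall y, complex.Re (g y) <= complex.Re `|y|) -> forall y, `|g y| <= `|y|.
Proof.
move=> gZ gRe y; have [->|gy0] := eqVneq (g y) 0; first by rewrite normr0.
pose c := `|g y| / g y.
have cg : c * g y = `|g y| by rewrite /c mulrVK // unitfE.
have c1 : `|c| = 1.
  by rewrite /c normrM normrV ?unitfE // normr_id mulfV // normr_eq0.
have := gRe (c *: y); rewrite gZ cg normrZ c1 mul1r => Re_le.
by rewrite lecE Re_le andbT (ger0_Im (normr_ge0 _)) (ger0_Im (normr_ge0 _)).
Qed.

Lemma norming_functionals_complex (R : realType) :
  has_norming_functionals (K := R[i]) (fun z => (complex.Re z)%:C).
Proof.
move=> Y y0; pose p (v : realified Y) : R := complex.Re `|v : Y|.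
have pD (x y : realified Y) : p (x + y) <= p x + p y.
  by rewrite /p -ReD; have := ler_normD (x : Y) (y : Y); rewrite lecE => /andP[].
have pZ r (x : realified Y) : p (r *: x) = `|r| * p x.
  rewrite /p /GRing.scale /= /realified_scale normrZ.
  have -> : `|r%:C| = `|r|%:C by rewrite normc_def /= expr0n /= addr0 sqrtr_sqr.
  by case: `|x : Y| => a b /=; rewrite mul0r subr0.
have [u [uD uZ ule uy0]] := hahn_banach_seminorm pD pZ y0.
have uDY : {morph (u : Y -> R) : x y / x + y} := uD.
have uZY : forall r (y : Y), u (r%:C *: y) = r * u y := uZ.
have gZ := complexificationZ uDY uZY.
have [f fu] := linear_functional_of (complexificationD uDY) gZ.
exists f; split=> [y|]; rewrite fu.
- apply: (norm_le_of_Re_le gZ) => v.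
  by rewrite Re_complexification; exact: ule.
- by rewrite Re_complexification uy0 RRe_real // normr_real.
Qed.

Lemma re_le_norm_complex (R : realType) (z : R[i]) : (complex.Re z)%:C <= `|z|.
Proof. by apply: le_trans (normc_ge_Re z); rewrite lecR ler_norm. Qed.

Theorem lemma2p2 (R : realType) :
  lemma2p2_claim (K := R) id /\
  lemma2p2_claim (K := R[i]) (fun z : R[i] => ((complex.Re z)%:C)%C).
Proof.
split; apply: lemma2p2_claim_of_norming.
- exact: ler_norm.
- by [].
- exact: norming_functionals_real.
- exact: re_le_norm_complex.
- by move=> a b; rewrite ReD raddfD.
- exact: norming_functionals_complex.
Qed.
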